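(* Let $\{y_t\}_{t\in\mathbb{Z}}$ be a real, mean-zero, covariance-stationary series with $\mathcal{F}_t=\sigma(y_s,\,s\le t)$, such that $y_t=\sum_{s=0}^{\infty}\kappa_s\epsilon_{t-s}$ with $\kappa_0=1$, $\sum_s|\kappa_s|<\infty$, $\kappa(z)=\sum_s\kappa_sz^s\ne0$ for $|z|\le1$, $\{\epsilon_t\}$ a martingale difference sequence with respect to $\{\mathcal{F}_t\}$, $E[\epsilon_t^2\mid\mathcal{F}_{t-1}]=\sigma_\epsilon^2$ a.s. (constant), and $\sup_t|\epsilon_t|\le K<\infty$ a.s. Suppose moreover that $\sup_tE[|\epsilon_t|^{2p}\mid\mathcal{F}_{t-1}]<\infty$ a.s. for some $p>1$. Then for any sequence $\hat y_t=y_t-\tilde y_{t-1}$ in which each $\tilde y_{t-1}$ is $\mathcal{F}_{t-1}$-measurable, it holds that $\liminf_{t\to\infty}t^{-1}\sum_{s=1}^t\hat y_s^2\ge\sigma_\epsilon^2$ almost surely, where $\sigma_\epsilon^2=E[\epsilon_t^2]$. *)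

From HB Require Import structures.
From mathcomp Require Import all_boot all_algebra.
From mathcomp Require Import all_classical all_reals all_analysis.
From mathcomp Require Import complex.
Set Implicit Arguments. Unset Strict Implicit. Unset Printing Implicit Defensive.
Import GRing.Theory Num.Theory numFieldNormedType.Exports.
Local Open Scope classical_set_scope.
Local Open Scope ring_scope.

Definition natural_filtration (T : Type) (R : realType) (y : int -> T -> R)
  (t : int) : set (set T) :=
  <<s [set A | exists s : int, (s <= t)%R /\
        exists B : set R, measurable B /\ A = y s @^-1` B] >>.

Definition G_measurable (T : Type) (R : realType) (G : set (set T))
  (f : T -> R) : Prop :=
  forall B : set R, measurable B -> G (f @^-1` B).

Definition is_cond_exp d (T : measurableType d) (R : realType)
  (P : probability T R) (G : set (set T)) (X Z : T -> R) : Prop :=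
  [/\ G_measurable G Z,
      P.-integrable setT (EFin \o Z) &
      forall A, G A -> (\int[P]_(x in A) (X x)%:E = \int[P]_(x in A) (Z x)%:E)%E].

(* kappa(z) = sum_s kappa_s z^s for complex z, the complex series being
   summed componentwise (real and imaginary parts). *)
Definition power_series_at (R : realType) (k : nat -> R) (z : R[i]) : R[i] :=
  Complex (limn (series (fun s : nat => (complex.Re (Complex (k s) 0 * z ^+ s) : R)) : R^nat))
          (limn (series (fun s : nat => (complex.Im (Complex (k s) 0 * z ^+ s) : R)) : R^nat)).

(* Write y_s = eps_s + w_s, where w_s = sum_(k >= 1) kappa_k eps_(s-k) is known at time
   s - 1, and let v_s = w_s - ytil_(s-1). Because |eps_s| <= K, replacing v_s by its
   clipping c_s to [-2K, 2K] gives eps_s^2 + 2 eps_s c_s <= (eps_s + v_s)^2, so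
   (y_s - ytil_(s-1))^2 >= sigma2 + d_s with d_s = eps_s^2 - sigma2 + 2 eps_s c_s a
   bounded martingale difference. Its partial sums S_n have orthogonal increments, so
   E[S_n^2] <= n C^2, hence sum_m E[(S_(m^2) / m^2)^2] < oo and S_(m^2) / m^2 -> 0
   almost surely; bounded increments fill the gaps between squares, so S_n / n -> 0
   and the average of the squared prediction errors is at least sigma2 - o(1). *)

From HB Require Import structures.
From mathcomp Require Import all_boot all_algebra.
From mathcomp Require Import all_classical all_reals all_analysis.
From mathcomp Require Import complex.
From mathcomp Require Import all_order measurable_realfun ring lra zify.
Import GRing.Theory Num.Theory numFieldNormedType.Exports.
Import Order.TTheory.
Local Open Scope classical_set_scope.
Local Open Scope ring_scope.

Section clip.
Context {R : realDomainType}.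
Implicit Types c z e v : R.

Definition clip c z : R := Num.max (- c) (Num.min c z).

Lemma norm_clip_le c z : 0 <= c -> `|clip c z| <= c.
Proof.
move=> c0; rewrite /clip ler_norml le_max lexx /= ge_max ge_min lexx /=.
by rewrite andbT lerNl (le_trans _ c0) // oppr_le0.
Qed.

Lemma clip_id c z : `|z| <= c -> clip c z = z.
Proof.
by rewrite ler_norml => /andP[cz zc]; rewrite /clip (min_idPr zc) (max_idPr cz).
Qed.

Lemma sqrD_ge_clip c e v : `|e| <= c ->
  e ^+ 2 + 2 * e * clip (2 * c) v <= (e + v) ^+ 2.
Proof.
move=> /[dup] /(le_trans (normr_ge0 _)) c0; rewrite ler_norml => /andP[ce ec].
rewrite /clip; have [v2c|v2c] := lerP v (2 * c).
  by have [vN|vN] := lerP (- (2 * c)) v; nra.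
by rewrite (max_idPr _); nra.
Qed.

End clip.

Section stair.
Context {R : realFieldType}.

(* [stair N a] is [min(N, floor a)] for [a >= 0], written as a sum of indicators
   so that integrals against it split. *)
Definition stair (N : nat) (a : R) : R := \sum_(k < N) \1_`[(k.+1)%:R, +oo[ a.

Lemma stairS N a : stair N.+1 a = stair N a + \1_`[(N.+1)%:R, +oo[ a.
Proof. by rewrite /stair big_ord_recr. Qed.

Lemma indic_itv_ge (b a : R) : \1_`[b, +oo[ a = (if b <= a then 1 else 0 : R).
Proof. by rewrite indicE mem_setE in_itv /= andbT; case: ifP. Qed.

Lemma stair_ge0 N a : 0 <= stair N a.
Proof. by apply: sumr_ge0 => k _; rewrite indic_itv_ge; case: ifP. Qed.

Lemma stair_le_nat N a : stair N a <= N%:R.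
Proof.
rewrite -[N in N%:R]card_ord -sumr_const; apply: ler_sum => k _.
by rewrite indic_itv_ge; case: ifP.
Qed.

Lemma stair_full N a : N%:R <= a -> stair N a = N%:R.
Proof.
move=> Na; rewrite /stair (eq_bigr (fun=> 1)) ?sumr_const ?card_ord // => k _.
by rewrite indic_itv_ge ifT // (le_trans _ Na) // ler_nat.
Qed.

Lemma stair_le N a : 0 <= a -> stair N a <= a.
Proof.
move=> a0; elim: N => [|N IH]; first by rewrite /stair big_ord0.
rewrite stairS indic_itv_ge; case: ifP => [Na|_]; last by rewrite addr0.
by have := stair_le_nat N a; rewrite -natr1 in Na; lra.
Qed.

Lemma stair_gt N a : a < N%:R + 1 -> a - 1 < stair N a.
Proof.
elim: N a => [|N IH] a aN; first by rewrite /stair big_ord0; lra.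
rewrite stairS indic_itv_ge; case: ifP => Na; last first.
  by rewrite addr0; apply: IH; move/negbT: Na; rewrite -ltNge -natr1; lra.
rewrite stair_full; last by apply: le_trans Na; rewrite ler_nat.
by move: aN; rewrite -natr1; lra.
Qed.

Lemma stair_approx (e M z : R) N : 0 < e -> `|z| <= M -> 2 * M / e < N%:R ->
  0 <= z - (e * stair N ((z + M) / e) - M) <= e.
Proof.
rewrite ler_norml => e0 /andP[Mz zM] MN.
have a0 : 0 <= (z + M) / e by apply: divr_ge0; [lra | exact: ltW].
have aN : (z + M) / e < N%:R + 1.
  have : (z + M) / e <= 2 * M / e by rewrite ler_pM2r ?invr_gt0 //; lra.
  lra.
have ea : e * ((z + M) / e) = z + M by rewrite mulrC divfK ?gt_eqF.
have := stair_le N _ a0; have := stair_gt N _ aN.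
set a := (z + M) / e in ea *; set s := stair N a => a1s sa.
have : e * (a - 1) < e * s by rewrite ltr_pM2l.
have : e * s <= e * a by rewrite ler_pM2l.
rewrite mulrBr mulr1; lra.
Qed.

End stair.

Lemma exists_sqr_bracket t : (0 < t)%N ->
  exists m, (m.+1 * m.+1 <= t < m.+2 * m.+2)%N.
Proof.
elim: t => [//|[|t] IH] _; first by exists 0%N.
have [m /andP[mt tm]] := IH isT.
have [tm'|tm'] := ltnP t.+2 (m.+2 * m.+2); first by exists m; lia.
by exists m.+1; nia.
Qed.

Section real_sequences.
Context {R : realFieldType}.

Lemma sum_inv_sqr_le2 n : \sum_(i < n) ((i.+1 * i.+1)%:R)^-1 <= 2 :> R.
Proof.
pose g i : R := - (2 / i.+1%:R).
have step i : ((i.+1 * i.+1)%:R)^-1 <= g i.+1 - g i.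
  have a1 : 1 <= i.+1%:R :> R by rewrite ler1n.
  rewrite /g -[i.+2%:R]natr1 natrM; set a : R := i.+1%:R in a1 *.
  have a0 : 0 < a by lra.
  have -> : - (2 / (a + 1)) - - (2 / a) = 2 / (a * (a + 1)) by field; lra.
  rewrite ler_pdivlMr ?mulr_gt0 ?addr_gt0 //.
  rewrite invfM -mulrA mulKf ?gt_eqF // mulrC ler_pdivrMr //; lra.
apply: le_trans (ler_sum _ (fun (i : 'I_n) _ => step i)) _.
rewrite -(big_mkord xpredT (fun i => g i.+1 - g i)) telescope_sumr // /g.
by rewrite divr1 opprK gerDr oppr_le0 divr_ge0.
Qed.

Lemma eq0_of_norm_le_mul (a B : R) : 0 <= B ->
  (forall e, 0 < e -> `|a| <= B * e) -> a = 0.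
Proof.
move=> B0 aB; apply/eqP; rewrite -normr_le0; apply/ler_addgt0Pr => e e0.
have B1 : 0 < B + 1 by rewrite ltr_wpDl.
rewrite add0r (le_trans (aB (e / (B + 1)) _)) ?divr_gt0 //.
by rewrite mulrCA ger_pMr // ler_pdivrMr // mul1r lerDl.
Qed.

Lemma norm_sum_le (f : nat -> R) (C : R) n :
  (forall i, `|f i| <= C) -> `|\sum_(i < n) f i| <= n%:R * C.
Proof.
move=> fC; apply: le_trans (ler_norm_sum _ _ _) _.
by rewrite -[n in n%:R]card_ord mulr_natl -sumr_const; apply: ler_sum.
Qed.

Lemma norm_sub_le_steps (S : nat -> R) (C : R) k j :
  (forall n, `|S n.+1 - S n| <= C) -> `|S (k + j)%N - S k| <= j%:R * C.
Proof.
move=> SC; rewrite -telescope_sumr ?leq_addr //.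
apply: le_trans (ler_norm_sum _ _ _) _.
by rewrite (le_trans (ler_sum _ (fun i _ => SC i))) // sumr_const_nat addKn mulr_natl.
Qed.

Lemma sqr_bracket_bound {S : nat -> R} {C e : R} {m t : nat} : 0 < e ->
  (forall n, `|S n.+1 - S n| <= C) -> (m.+1 * m.+1 <= t < m.+2 * m.+2)%N ->
  6 * C <= e * m.+1%:R -> `|S (m.+1 * m.+1)%N| <= e / 2 * (m.+1 * m.+1)%:R ->
  `|S t| <= e * t%:R.
Proof.
move=> e0 SC /andP[mt tm] Cm hN.
have C0 : 0 <= C := le_trans (normr_ge0 _) (SC 0%N).
have := norm_sub_le_steps _ _ (m.+1 * m.+1) (t - m.+1 * m.+1) SC; rewrite subnKC //.
have : (t - m.+1 * m.+1)%:R <= 3 * m.+1%:R :> R by rewrite -natrM ler_nat; lia.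
have : (m.+1 * m.+1)%:R <= t%:R :> R by rewrite ler_nat.
have := ler_normD (S (m.+1 * m.+1)%N) (S t - S (m.+1 * m.+1)%N).
move: hN; rewrite [X in `|X| <= _ + _]addrCA subrr addr0 natrM.
have r0 : 0 < m.+1%:R :> R by rewrite ltr0n.
set r := m.+1%:R in r0 Cm *; set k := (t - _)%:R; set sN := `|S _|; set st := `|S t - _|.
move=> hN tri rt kr hst.
have : k * C <= 3 * r * C by apply: ler_wpM2r.
nra.
Qed.

End real_sequences.

Section averages.
Context {R : realType}.

Lemma cvg0_of_sqr_subseq (S : nat -> R) (C : R) :
  (forall n, `|S n.+1 - S n| <= C) ->
  (fun m => S (m.+1 * m.+1)%N / (m.+1 * m.+1)%:R) @ \oo --> 0 ->
  (fun n => S n / n%:R) @ \oo --> 0.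
Proof.
move=> SC /cvgr0Pnorm_le Ssq; apply/cvgr0Pnorm_le => e e0.
have normdiv n : `|S n / n%:R| = `|S n| / n%:R by rewrite normrM normfV normr_nat.
have [M1 _ hM1] := Ssq _ (divr_gt0 e0 (ltr0n _ 2)).
have [M2 hM2] : exists M2 : nat, 6 * C / e <= M2%:R.
  exists (Num.Def.archi_bound (6 * C / e)); apply/ltW/archi_boundP.
  by rewrite divr_ge0 ?mulr_ge0 ?(le_trans (normr_ge0 _) (SC 0%N)) // ltW.
exists ((maxn M1 M2).+1 * (maxn M1 M2).+1)%N => // t /= tM.
have t0 : (0 < t)%N by apply: leq_trans tM; rewrite muln_gt0.
have [m mt] := exists_sqr_bracket _ t0.
have [M1m M2m] : (M1 <= m)%N /\ (M2 <= m)%N by case/andP: mt; split; nia.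
rewrite normdiv ler_pdivrMr ?ltr0n //; apply: (sqr_bracket_bound e0 SC mt).
- apply: le_trans (_ : M2%:R * e <= _); first by rewrite -ler_pdivrMr.
  by rewrite mulrC ler_pM2l // ler_nat (leq_trans M2m).
- by have := hM1 m M1m; rewrite /= normdiv ler_pdivrMr ?ltr0n ?muln_gt0.
Qed.

Lemma limn_einf_ge (sig : R) (a b : nat -> R) :
  b @ \oo --> 0 -> (forall t, (0 < t)%N -> sig + b t <= a t) ->
  (sig%:E <= limn_einf (fun t => (a t)%:E))%E.
Proof.
move=> b0 ab; apply/lee_subgt0Pr => e e0; rewrite -EFinB limn_einf_lim.
apply: lime_ge; first exact: is_cvg_einfs.
have [N _ hN] : \forall t \near \oo, - e < b t.
  by apply: cvgr_gt; [exact: b0 | rewrite oppr_lt0].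
exists N.+1 => // n /= Nn; apply: le_ereal_inf_tmp => _ [k /= nk <-].
rewrite lee_fin; have := ab k (leq_trans (ltn0Sn N) (leq_trans Nn nk)).
have := hN k (leq_trans (leqnSn N) (leq_trans Nn nk)); rewrite /= => bk; lra.
Qed.

Lemma nneseries_fin_cvg0 (u : nat -> R) : (forall n, 0 <= u n) ->
  (\sum_(n <oo) (u n)%:E < +oo)%E -> u @ \oo --> 0.
Proof.
move=> u0 ufin; apply: cvg_series_cvg_0; apply: nondecreasing_is_cvgn.
  exact: nondecreasing_series.
have s0 : (0 <= \sum_(n <oo) (u n)%:E)%E.
  by apply: nneseries_ge0 => k _ _; rewrite lee_fin.
exists (fine (\sum_(n <oo) (u n)%:E)) => _ [n _ <-].
rewrite -lee_fin fineK ?ge0_fin_numE // /series /= -sumEFin.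
by apply: nneseries_lim_ge => k _ _; rewrite lee_fin.
Qed.

Lemma nneseries_inv_sqr_le2 :
  (\sum_(m <oo) (((m.+1 * m.+1)%:R)^-1 : R)%:E <= 2%:E)%E.
Proof.
apply: lime_le; first by apply: is_cvg_nneseries => m _ _; rewrite lee_fin invr_ge0.
by apply: nearW => n; rewrite sumEFin lee_fin big_mkord sum_inv_sqr_le2.
Qed.

End averages.

Section orthogonality.
Context {d : measure_display} {T : measurableType d} {R : realType}.
Variable P : probability T R.

Lemma bounded_integrable (c : R) (D : set T) (f : T -> R) : measurable D ->
  measurable_fun setT f -> (forall x, `|f x| <= c) -> P.-integrable D (EFin \o f).
Proof.
move=> mD mf fc; apply: measurable_bounded_integrable => //.
- by rewrite (le_lt_trans (probability_le1 P mD)) ?ltry.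
- exact: measurable_funTS.
- exists c; split; first exact: num_real.
  by move=> M cM x _; apply: le_trans (fc x) (ltW cM).
Qed.

Lemma Rintegral_cst_probability (c : R) : \int[P]_x c = c.
Proof. by rewrite Rintegral_cst //; have /= -> := probability_setT P; rewrite mulr1. Qed.

Variable H : set (set T).
Hypothesis H_measurable : <<s H >> `<=` measurable.
Local Notation G := (setT : set (g_sigma_algebraType H)).

Lemma measurable_fun_generated {f : T -> R} :
  measurable_fun G f -> measurable_fun setT f.
Proof. by move=> mf _ Y mY; apply: H_measurable; exact: mf measurableT Y mY. Qed.

Variables (X : T -> R) (B : R).
Hypothesis mX : measurable_fun setT X.
Hypothesis X_bound : forall x, `|X x| <= B.
Hypothesis X_orth : forall A, <<s H >> A -> \int[P]_(x in A) X x = 0.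

Lemma measurable_stair N : measurable_fun setT (@stair R N).
Proof. by apply: measurable_sum => k; exact: measurable_indic. Qed.

Lemma integrable_mul_stair N {g : T -> R} : measurable_fun setT g ->
  P.-integrable setT (EFin \o (fun x => X x * stair N (g x))).
Proof.
move=> mg; have B0 : 0 <= B := le_trans (normr_ge0 _) (X_bound point).
apply: (bounded_integrable (B * N%:R)) => //.
  by apply: measurable_funM => //; exact: measurableT_comp (measurable_stair N) mg.
move=> x; rewrite normrM (ger0_norm (stair_ge0 _ _)).
by apply: ler_pM; rewrite ?stair_ge0 ?stair_le_nat.
Qed.

Lemma Rintegral_mul_stair N {g : T -> R} : measurable_fun G g ->
  \int[P]_x (X x * stair N (g x)) = 0.
Proof.
move=> mg; have mgT := measurable_fun_generated mg.
have B0 : 0 <= B := le_trans (normr_ge0 _) (X_bound point).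
elim: N => [|N IH].
  by under eq_fun do rewrite /stair big_ord0 mulr0; rewrite Rintegral_cst_probability.
pose A := g @^-1` `[N.+1%:R, +oo[.
have GA : <<s H >> A.
  by have := mg measurableT _ (measurable_itv `[N.+1%:R, +oo[); rewrite setTI.
under eq_fun do rewrite stairS mulrDr.
rewrite RintegralD //.
- rewrite IH add0r -(X_orth _ GA) (Rintegral_mkcond _ A); apply: eq_Rintegral => x _.
  rewrite patchE indicE.
  have -> : (x \in A) = (g x \in `[N.+1%:R, +oo[%classic)
    by apply/idP/idP => /set_mem ?; apply/mem_set.
  by case: (_ \in _); rewrite ?mulr1 ?mulr0.
- exact: integrable_mul_stair.
- apply: (bounded_integrable B) => //.
    by apply: measurable_funM => //; apply: measurableT_comp mgT; exact: measurable_indic.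
  by move=> x; rewrite normrM indic_itv_ge; case: ifP; rewrite ?normr1 ?normr0 ?mulr1 ?mulr0.
Qed.

Lemma Rintegral_mul_step (a b : R) N {g : T -> R} : measurable_fun G g ->
  \int[P]_x (X x * (a * stair N (g x) - b)) = 0.
Proof.
move=> mg; have GT : <<s H >> setT := @measurableT _ (g_sigma_algebraType H).
have iX : P.-integrable setT (EFin \o X) by exact: (bounded_integrable B).
have iXs := integrable_mul_stair N (measurable_fun_generated mg).
have iaXs : P.-integrable setT (EFin \o (fun x => a * (X x * stair N (g x)))).
  exact: eq_integrable (integrableZl measurableT a iXs).
have ibX : P.-integrable setT (EFin \o (fun x => b * X x)).
  exact: eq_integrable (integrableZl measurableT b iX).
have -> : (fun x => X x * (a * stair N (g x) - b)) =
    (fun x => a * (X x * stair N (g x)) - b * X x).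
  by apply/funext => x; ring.
rewrite RintegralB // !RintegralZl // (Rintegral_mul_stair N mg) (X_orth _ GT).
by rewrite !mulr0 subr0.
Qed.

Lemma Rintegral_mul_measurable_le (Z : T -> R) (M e : R) : measurable_fun G Z ->
  (forall x, `|Z x| <= M) -> 0 < e -> `|\int[P]_x (X x * Z x)| <= B * e.
Proof.
move=> mZ ZM e0; have mZT := measurable_fun_generated mZ.
have B0 : 0 <= B := le_trans (normr_ge0 _) (X_bound point).
have M0 : 0 <= M := le_trans (normr_ge0 _) (ZM point).
have [N MN] : exists N : nat, 2 * M / e < N%:R.
  by exists (Num.Def.archi_bound (2 * M / e)); apply: archi_boundP; rewrite divr_ge0 ?mulr_ge0 // ltW.
(* [Zq] is a G-measurable step function within [e] below [Z]. *)
pose Zq x : R := e * stair N ((Z x + M) / e) - M.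
have Zq_near x : 0 <= Z x - Zq x <= e by apply: stair_approx; rewrite ?ZM.
have mq : measurable_fun G (fun x => (Z x + M) / e).
  by apply: measurable_funM => //; apply: measurable_funD.
have mZq : measurable_fun setT Zq.
  apply: measurable_funB => //; apply: measurable_funM => //.
  exact: measurableT_comp (measurable_stair N) (measurable_fun_generated mq).
have XZ_bound x : `|X x * Z x - X x * Zq x| <= B * e.
  rewrite -mulrBr normrM; apply: ler_pM => //.
  by case/andP: (Zq_near x) => ? ?; rewrite ger0_norm.
have iXZ : P.-integrable setT (EFin \o (fun x => X x * Z x)).
  apply: (bounded_integrable (B * M)) => //; first exact: measurable_funM.
  by move=> x; rewrite normrM ler_pM.
have iXZq : P.-integrable setT (EFin \o (fun x => X x * Zq x)).
  apply: (bounded_integrable (B * (M + e))) => //; first exact: measurable_funM.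
  move=> x; rewrite normrM; apply: ler_pM => //.
  move: (ZM x) (Zq_near x); rewrite !ler_norml => /andP[? ?] /andP[? ?].
  apply/andP; split; lra.
have -> : \int[P]_x (X x * Z x) = \int[P]_x (X x * Z x - X x * Zq x).
  by rewrite RintegralB // (Rintegral_mul_step e M N mq) subr0.
have iXZZq := integrableB measurableT iXZ iXZq.
apply: le_trans (le_normr_Rintegral _ _) _ => //.
rewrite -[leRHS]Rintegral_cst_probability; apply: le_Rintegral => //.
- exact: integrable_norm.
- exact: (bounded_integrable `|B * e|).
Qed.

Lemma Rintegral_mul_measurable_eq0 (Z : T -> R) (M : R) : measurable_fun G Z ->
  (forall x, `|Z x| <= M) -> \int[P]_x (X x * Z x) = 0.
Proof.
move=> mZ ZM; apply: (eq0_of_norm_le_mul _ _ (le_trans (normr_ge0 _) (X_bound point))).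
by move=> e; apply: Rintegral_mul_measurable_le mZ ZM.
Qed.

End orthogonality.

Section orthogonal_increments.
Context {d : measure_display} {T : measurableType d} {R : realType}.
Variables (P : probability T R) (dx : nat -> T -> R) (C : R).
Let S n x := \sum_(i < n) dx i x.
Hypothesis mdx : forall n, measurable_fun setT (dx n).
Hypothesis dx_bound : forall n x, `|dx n x| <= C.
Hypothesis dx_orth : forall n, \int[P]_x (dx n x * S n x) = 0.

Let C0 : 0 <= C. Proof. exact: le_trans (normr_ge0 _) (dx_bound 0 point). Qed.

Let mS n : measurable_fun setT (S n). Proof. exact: measurable_sum. Qed.

Let S_bound n x : `|S n x| <= n%:R * C.
Proof. exact: (norm_sum_le (dx^~ x)). Qed.

Let integrable_bounded {f : T -> R} {c : R} : measurable_fun setT f ->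
  (forall x, `|f x| <= c) -> P.-integrable setT (EFin \o f).
Proof. exact: bounded_integrable. Qed.

Let integrable_S_sqr n : P.-integrable setT (EFin \o (fun x => S n x ^+ 2)).
Proof.
apply: (integrable_bounded (c := (n%:R * C) ^+ 2) (measurable_funX 2 (mS n))) => x.
by rewrite normrX lerXn2r ?nnegrE ?mulr_ge0.
Qed.

Lemma Rintegral_partial_sum_sqr_le n : \int[P]_x (S n x ^+ 2) <= n%:R * C ^+ 2.
Proof.
elim: n => [|n IH].
  under eq_fun do rewrite /S big_ord0 expr0n /=.
  by rewrite (Rintegral_cst_probability P) mul0r.
have -> : (fun x => S n.+1 x ^+ 2) =
    (fun x => S n x ^+ 2 + 2 * (dx n x * S n x) + dx n x ^+ 2).
  by apply/funext => x; rewrite /S big_ord_recr /=; ring.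
have bdxS x : `|dx n x * S n x| <= C * (n%:R * C) by rewrite normrM ler_pM.
have bdx2 x : `|dx n x ^+ 2| <= C ^+ 2.
  by rewrite normrX lerXn2r ?nnegrE.
have iS2 := integrable_S_sqr n.
have idxS := integrable_bounded (measurable_funM (mdx n) (mS n)) bdxS.
have i2dxS : P.-integrable setT (EFin \o (fun x => 2 * (dx n x * S n x))).
  exact: eq_integrable (integrableZl measurableT 2 idxS).
have idx2 := integrable_bounded (measurable_funX 2 (mdx n)) bdx2.
rewrite RintegralD //; last exact: eq_integrable (integrableD measurableT iS2 i2dxS).
rewrite RintegralD // RintegralZl //.
rewrite dx_orth mulr0 addr0 -natr1 mulrDl mul1r lerD //.
rewrite -[leRHS](Rintegral_cst_probability P); apply: le_Rintegral => //.
- by apply: (integrable_bounded (c := C ^+ 2)) => // x; rewrite ger0_norm ?sqr_ge0.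
- by move=> x _; have := bdx2 x; rewrite ger0_norm ?sqr_ge0.
Qed.

Lemma integral_partial_sum_avg_sqr_le n : (0 < n)%N ->
  (\int[P]_x ((S n x / n%:R) ^+ 2)%:E <= (C ^+ 2 * (n%:R)^-1)%:E)%E.
Proof.
move=> n0; have n0' : 0 < n%:R :> R by rewrite ltr0n.
have iS2 := integrable_S_sqr n.
have avgE : (fun x => (S n x / n%:R) ^+ 2) = fun x => (n%:R)^-1 ^+ 2 * S n x ^+ 2.
  by apply/funext => x; rewrite exprMn mulrC.
have iavg : P.-integrable setT (EFin \o (fun x => (S n x / n%:R) ^+ 2)).
  by rewrite avgE; exact: eq_integrable (integrableZl measurableT ((n%:R)^-1 ^+ 2) iS2).
rewrite -[X in (X <= _)%E](fineK (integrable_fin_num measurableT iavg)) lee_fin.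
rewrite -/(Rintegral _ _ _) avgE RintegralZl //.
apply: le_trans (ler_wpM2l (sqr_ge0 _) (Rintegral_partial_sum_sqr_le _)) _.
by rewrite le_eqVlt; apply/orP; left; apply/eqP; field; rewrite gt_eqF.
Qed.

Let avg_sqr m x := (S (m.+1 * m.+1) x / (m.+1 * m.+1)%:R) ^+ 2.

Let integrable_sum_avg_sqr : P.-integrable setT (fun x => \sum_(m <oo) (avg_sqr m x)%:E)%E.
Proof.
have mavg m : measurable_fun setT (avg_sqr m).
  by apply: measurable_funX; apply: measurable_funM.
apply/integrableP; split.
  by apply: ge0_emeasurable_sum => [k x _ _|k _]; [rewrite lee_fin sqr_ge0 | exact/measurable_EFinP].
have sum0 x : (0 <= \sum_(m <oo) (avg_sqr m x)%:E)%E.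
  by apply: nneseries_ge0 => m _ _; rewrite lee_fin sqr_ge0.
under eq_integral => x _ do rewrite (gee0_abs (sum0 x)).
rewrite integral_nneseries //; last 2 first.
- by move=> m; exact/measurable_EFinP.
- by move=> m x _; rewrite lee_fin sqr_ge0.
apply: (@le_lt_trans _ _ (\sum_(m <oo) ((C ^+ 2)%:E * (((m.+1 * m.+1)%:R)^-1)%:E))%E).
  apply: lee_nneseries => [m _ _|m _].
    by apply: integral_ge0 => x _; rewrite lee_fin sqr_ge0.
  by rewrite -EFinM integral_partial_sum_avg_sqr_le ?muln_gt0.
rewrite nneseriesZl; last by move=> m _; rewrite lee_fin invr_ge0.
apply: le_lt_trans (lee_wpmul2l _ nneseries_inv_sqr_le2) _; first by rewrite lee_fin sqr_ge0.
by rewrite -EFinM ltry.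
Qed.

Lemma ae_cvg0_partial_sum_sqr :
  {ae P, forall x, (fun m => S (m.+1 * m.+1) x / (m.+1 * m.+1)%:R) @ \oo --> 0}.
Proof.
apply: filterS (integrable_ae measurableT integrable_sum_avg_sqr) => x /(_ I) fin.
have /cvgr0Pnorm_le avg0 : avg_sqr ^~ x @ \oo --> 0.
  apply: nneseries_fin_cvg0 => [m|]; first exact: sqr_ge0.
  by rewrite -ge0_fin_numE //; apply: nneseries_ge0 => m _ _; rewrite lee_fin sqr_ge0.
apply/cvgr0Pnorm_le => e e0; apply: filterS (avg0 _ (exprn_gt0 2 e0)) => m.
rewrite /avg_sqr ger0_norm ?sqr_ge0 //; set a := S _ x / _ => ae.
by rewrite ler_norml; apply/andP; split; nra.
Qed.

Lemma ae_cvg0_partial_sum_avg : {ae P, forall x, (fun n => S n x / n%:R) @ \oo --> 0}.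
Proof.
apply: filterS ae_cvg0_partial_sum_sqr => x; apply: (@cvg0_of_sqr_subseq _ _ C) => n.
by rewrite /S big_ord_recr /= addrAC subrr add0r.
Qed.

End orthogonal_increments.

Section past.
Context {d : measure_display} {T : measurableType d} {R : realType}.
Variable y : int -> T -> R.

(* [natural_filtration y t] is [<<s past_events t >>] by definition. *)
Definition past_events (t : int) : set (set T) :=
  [set A | exists s : int, (s <= t)%R /\
        exists B : set R, measurable B /\ A = y s @^-1` B].

Local Notation past t := (setT : set (g_sigma_algebraType (past_events t))).

Lemma past_events_measurable t : (forall t, measurable_fun setT (y t)) ->
  <<s past_events t >> `<=` measurable.
Proof.
move=> my; apply: smallest_sub; first exact: sigma_algebra_measurable.
by move=> _ [s [_ [B [mB ->]]]]; rewrite -[_ @^-1` _]setTI; exact: my.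
Qed.

Lemma past_events_le s t : (s <= t)%R -> <<s past_events s >> `<=` <<s past_events t >>.
Proof.
move=> st; apply: smallest_sub; first exact: smallest_sigma_algebra.
move=> A [r [rs AB]]; apply: sub_gen_smallest; exists r; split => //.
exact: le_trans rs st.
Qed.

Lemma measurable_past_le s t {f : T -> R} : (s <= t)%R ->
  measurable_fun (past s) f -> measurable_fun (past t) f.
Proof. by move=> st mf _ B mB; exact: past_events_le st _ (mf measurableT B mB). Qed.

Lemma G_measurable_past {t : int} {f : T -> R} :
  G_measurable (natural_filtration y t) f -> measurable_fun (past t) f.
Proof. by move=> mf _ B mB; rewrite setTI; exact: mf. Qed.

End past.

Section prediction_error.
Context {d : measure_display} {T : measurableType d} {R : realType}.
Variables (P : probability T R) (y eps ytil : int -> T -> R).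
Variables (kappa : nat -> R) (sigma2 K : R).
Hypothesis my : forall t, measurable_fun setT (y t).
Hypothesis eps_adapted : forall t, G_measurable (natural_filtration y t) (eps t).
Hypothesis ytil_adapted : forall t, G_measurable (natural_filtration y t) (ytil t).
Hypothesis eps_mds :
  forall t, is_cond_exp P (natural_filtration y (t - 1)) (eps t) (fun=> 0).
Hypothesis eps_cond_var : forall t,
  is_cond_exp P (natural_filtration y (t - 1)) (fun x => eps t x ^+ 2) (fun=> sigma2).
Hypothesis eps_bound : {ae P, forall x, forall t, `|eps t x| <= K}.

Local Notation past t := (setT : set (g_sigma_algebraType (past_events y t))).

Let past_measurable {t} : <<s past_events y t >> `<=` measurable :=
  past_events_measurable y t my.

Let measurable_past {t : int} {f : T -> R} :
  measurable_fun (past t) f -> measurable_fun setT f.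
Proof. exact: measurable_fun_generated. Qed.

(* Equal to [eps] almost surely, but bounded everywhere. *)
Definition eps_clip t x := clip `|K| (eps t x).

Lemma eps_clip_bound t x : `|eps_clip t x| <= `|K|.
Proof. exact: norm_clip_le. Qed.

Lemma measurable_eps_clip t : measurable_fun (past t) (eps_clip t).
Proof.
apply: measurable_maxr => //; apply: measurable_minr => //.
exact: G_measurable_past.
Qed.

Lemma eps_clip_id t x : `|eps t x| <= K -> eps_clip t x = eps t x.
Proof. by move=> xK; rewrite /eps_clip clip_id // (le_trans xK) ?ler_norm. Qed.

Lemma eps_clipE : {ae P, forall x t, eps_clip t x = eps t x}.
Proof. by apply: filterS eps_bound => x xK t; exact: eps_clip_id. Qed.

(* The predictable part [sum_(k >= 1) kappa_k eps_(s-k)] of [y_s]; the [limn_esup]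
   makes it defined and F_(s-1)-measurable everywhere. *)
Definition eps_pred (s : nat) x := fine (limn_esup
  (fun n => (\sum_(k < n) kappa k.+1 * eps_clip (s%:Z - k.+1%:Z) x)%:E)).

Lemma measurable_eps_pred s : measurable_fun (past (s%:Z - 1)) (eps_pred s).
Proof.
apply: measurableT_comp; first exact: fine_measurable.
apply: measurable_fun_limn_esup => n; apply/measurable_EFinP.
apply: measurable_sum => k; apply: measurable_funM => //.
by apply: (measurable_past_le _ (s%:Z - k.+1%:Z)); [lia | exact: measurable_eps_clip].
Qed.

Definition pred_gap (s : nat) x := clip (2 * `|K|) (eps_pred s x - ytil (s%:Z - 1) x).

Lemma measurable_pred_gap s : measurable_fun (past (s%:Z - 1)) (pred_gap s).
Proof.
apply: measurable_maxr => //; apply: measurable_minr => //.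
by apply: measurable_funB; [exact: measurable_eps_pred | exact: G_measurable_past].
Qed.

Definition mart_diff (s : nat) x :=
  eps_clip s x ^+ 2 - sigma2 + 2 * eps_clip s x * pred_gap s x.

Definition mart_diff_bound := `|K| ^+ 2 + `|sigma2| + 4 * `|K| ^+ 2.

Lemma measurable_mart_diff (s : nat) : measurable_fun (past s%:Z) (mart_diff s).
Proof.
have me := measurable_eps_clip s.
apply: measurable_funD; first by apply: measurable_funB => //; exact: measurable_funX.
apply: measurable_funM; first exact: measurable_funM.
by apply: (measurable_past_le _ (s%:Z - 1)); [lia | exact: measurable_pred_gap].
Qed.

Lemma eps_clip_sqr_sub_le t x : `|eps_clip t x ^+ 2 - sigma2| <= `|K| ^+ 2 + `|sigma2|.
Proof.
apply: le_trans (ler_normB _ _) _.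
by rewrite lerD2r normrX lerXn2r ?nnegrE // eps_clip_bound.
Qed.

Lemma pred_gap_bound s x : `|pred_gap s x| <= 2 * `|K|.
Proof. by apply: norm_clip_le; rewrite mulr_ge0. Qed.

Lemma mart_diff_le s x : `|mart_diff s x| <= mart_diff_bound.
Proof.
rewrite /mart_diff /mart_diff_bound; apply: le_trans (ler_normD _ _) _.
apply: lerD; first exact: eps_clip_sqr_sub_le.
have := eps_clip_bound s x; have := pred_gap_bound s x.
rewrite !normrM normr_nat; have := normr_ge0 (eps_clip s x); nra.
Qed.

Let measurable_eps t : measurable_fun setT (eps t).
Proof. exact: measurable_past (G_measurable_past y (eps_adapted t)). Qed.

Lemma integral_eps_clipE t (A : set T) (g : R -> R) : measurable A -> measurable_fun setT g ->
  (\int[P]_(x in A) (g (eps_clip t x))%:E = \int[P]_(x in A) (g (eps t x))%:E)%E.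
Proof.
move=> mA mg; apply: ae_eq_integral => //.
- apply/measurable_funTS/measurable_EFinP; apply: measurableT_comp mg _.
  exact: measurable_past (measurable_eps_clip t).
- by apply/measurable_funTS/measurable_EFinP; apply: measurableT_comp mg _.
- by apply: filterS eps_clipE => x xE _; rewrite xE.
Qed.

Lemma Rintegral_eps_clip_past t A : <<s past_events y (t - 1) >> A ->
  \int[P]_(x in A) eps_clip t x = 0.
Proof.
move=> HA; have [_ _ /(_ A HA)] := eps_mds t.
rewrite /Rintegral (integral_eps_clipE t _ id) //; last exact: past_measurable _ HA.
by move=> ->; rewrite integral0.
Qed.

Lemma Rintegral_eps_clip_sqr_past t A : <<s past_events y (t - 1) >> A ->
  \int[P]_(x in A) (eps_clip t x ^+ 2 - sigma2) = 0.
Proof.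
move=> HA; have mA := past_measurable _ HA; have [_ _ /(_ A HA)] := eps_cond_var t.
have me2 := measurable_funX 2 (measurable_past (measurable_eps_clip t)).
rewrite RintegralB //; last 2 first.
- apply: (bounded_integrable P (`|K| ^+ 2)) => // x.
  by rewrite normrX lerXn2r ?nnegrE // eps_clip_bound.
- exact: (bounded_integrable P `|sigma2|).
rewrite Rintegral_cst // /Rintegral (integral_eps_clipE t _ (fun r => r ^+ 2)) //.
by move=> ->; rewrite integral_cst // fineM ?fin_num_measure // subrr.
Qed.

Lemma Rintegral_mart_diff_mul_past s (Z : T -> R) (M : R) :
  measurable_fun (past (s%:Z - 1)) Z -> (forall x, `|Z x| <= M) ->
  \int[P]_x (mart_diff s x * Z x) = 0.
Proof.
move=> mZ ZM; have M0 : 0 <= M := le_trans (normr_ge0 _) (ZM point).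
have me := measurable_past (measurable_eps_clip s).
have mgZ : measurable_fun (past (s%:Z - 1)) (fun x => 2 * pred_gap s x * Z x).
  by apply: measurable_funM => //; apply: measurable_funM => //; exact: measurable_pred_gap.
have gZ x : `|2 * pred_gap s x * Z x| <= 2 * (2 * `|K|) * M.
  by rewrite !normrM normr_nat ler_pM // ler_pM2l // pred_gap_bound.
have eZ x : `|(eps_clip s x ^+ 2 - sigma2) * Z x| <= (`|K| ^+ 2 + `|sigma2|) * M.
  by rewrite normrM ler_pM // eps_clip_sqr_sub_le.
have -> : (fun x => mart_diff s x * Z x) =
    (fun x => (eps_clip s x ^+ 2 - sigma2) * Z x + eps_clip s x * (2 * pred_gap s x * Z x)).
  by apply/funext => x; rewrite /mart_diff; ring.
have me2 : measurable_fun setT (fun x => eps_clip s x ^+ 2 - sigma2).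
  by apply: measurable_funB => //; exact: measurable_funX.
have mZT := measurable_past mZ; have mgZT := measurable_past mgZ.
rewrite RintegralD //; last 2 first.
- exact: (bounded_integrable P _ _ _ _ (measurable_funM me2 mZT) eZ).
- apply: (bounded_integrable P (`|K| * (2 * (2 * `|K|) * M))) => //.
    exact: measurable_funM.
  by move=> x; rewrite normrM ler_pM // eps_clip_bound.
rewrite (Rintegral_mul_measurable_eq0 P _ past_measurable _ _ me2 (eps_clip_sqr_sub_le s)
  (Rintegral_eps_clip_sqr_past s) _ _ mZ ZM).
by rewrite (Rintegral_mul_measurable_eq0 P _ past_measurable _ _ me (eps_clip_bound s)
  (Rintegral_eps_clip_past s) _ _ mgZ gZ) addr0.
Qed.

Hypothesis kappa0 : kappa 0%N = 1.

Lemma eps_predE x s : (forall t, `|eps t x| <= K) ->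
  series (fun k => kappa k * eps (s%:Z - k%:Z) x) @ \oo --> y s x ->
  eps_pred s x = y s x - eps s x.
Proof.
move=> xK yx; pose u := series (fun k => kappa k * eps (s%:Z - k%:Z) x).
have tailE n : \sum_(k < n) kappa k.+1 * eps_clip (s%:Z - k.+1%:Z) x = u n.+1 - eps s x.
  rewrite /u seriesEord /= big_ord_recl /= kappa0 mul1r subr0 addrAC subrr add0r.
  by apply: eq_bigr => k _; rewrite eps_clip_id.
have tail_cvg : (fun n => (u n.+1 - eps s x)%:E) @ \oo --> (y s x - eps s x)%:E.
  apply/fine_cvgP; split; first exact: nearW.
  by apply: cvgB; [rewrite (cvg_shiftS u) | exact: cvg_cst].
rewrite /eps_pred (_ : (fun n => _) = fun n => (u n.+1 - eps s x)%:E).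
  by have [_ ->] := cvg_limn_einf_sup tail_cvg.
by apply/funext => n; rewrite tailE.
Qed.

Lemma sqr_pred_err_ge x s : (forall t, `|eps t x| <= K) ->
  series (fun k => kappa k * eps (s%:Z - k%:Z) x) @ \oo --> y s x ->
  sigma2 + mart_diff s x <= (y s x - ytil (s%:Z - 1) x) ^+ 2.
Proof.
move=> xK yx; have := sqrD_ge_clip _ _ (eps_pred s x - ytil (s%:Z - 1) x) (eps_clip_bound s x).
rewrite /mart_diff /pred_gap eps_clip_id // (eps_predE _ _ xK yx).
by rewrite (_ : eps s x + _ = y s x - ytil (s%:Z - 1) x); [lra | ring].
Qed.

Hypothesis y_MA : {ae P, forall x, forall t : int,
  series (fun s => kappa s * eps (t - s%:Z) x) @ \oo --> y t x}.

Lemma ae_liminf_avg_sqr_pred_err_ge : {ae P, forall x,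
  (sigma2%:E <= limn_einf (fun t : nat =>
     ((t%:R)^-1 * \sum_(1 <= s < t.+1) (y s%:Z x - ytil (s%:Z - 1) x) ^+ 2)%:E))%E}.
Proof.
have mdiff s : measurable_fun setT (mart_diff s.+1) := measurable_past (measurable_mart_diff s.+1).
have orth n : \int[P]_x (mart_diff n.+1 x * \sum_(i < n) mart_diff i.+1 x) = 0.
  apply: (Rintegral_mart_diff_mul_past _ _ (n%:R * mart_diff_bound)) => [|x].
    apply: measurable_sum => i; apply: (measurable_past_le _ i.+1%:Z).
      by have := ltn_ord i; lia.
    exact: measurable_mart_diff.
  by apply: (norm_sum_le (fun i => mart_diff i.+1 x)) => i; exact: mart_diff_le.
have := ae_cvg0_partial_sum_avg P (fun n => mart_diff n.+1) mart_diff_bound mdiff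
  (fun n x => mart_diff_le n.+1 x) orth.
apply: filterS3 eps_bound y_MA => x xK yx avg0.
apply: (limn_einf_ge _ _ _ avg0) => t t0.
rewrite [leRHS]mulrC ler_pdivlMr ?ltr0n // mulrDl divfK ?pnatr_eq0 -?lt0n // mulrC.
rewrite big_add1 /= big_mkord -[t in t%:R * _](card_ord t) mulr_natl -sumr_const -big_split.
by apply: ler_sum => i _; exact: sqr_pred_err_ge.
Qed.

End prediction_error.

Theorem proposition4p3 (d : measure_display) (T : measurableType d)
  (R : realType) (P : probability T R)
  (y eps : int -> T -> R) (kappa : nat -> R) (sigma2 K p : R) :
  (* y is a real, mean-zero, covariance-stationary series *)
  (forall t, measurable_fun setT (y t)) ->
  (forall t, P.-integrable setT (EFin \o (fun x => y t x ^+ 2))) ->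
  (forall t, (\int[P]_x (y t x)%:E = 0)%E) ->
  (exists gam : int -> R, forall t h,
      (\int[P]_x (y t x * y (t + h) x)%:E = (gam h)%:E)%E) ->
  (* MA(infinity) representation *)
  kappa 0%N = 1 ->
  cvgn (series (fun s => `|kappa s|)) ->
  (forall z : R[i], `|z| <= 1 -> power_series_at kappa z != 0) ->
  {ae P, forall x, forall t : int,
      series (fun s => kappa s * eps (t - s%:Z) x) @ \oo --> y t x} ->
  (* eps is a martingale difference sequence w.r.t. F_t = sigma(y_s, s <= t) *)
  (forall t, G_measurable (natural_filtration y t) (eps t)) ->
  (forall t, P.-integrable setT (EFin \o eps t)) ->
  (forall t, is_cond_exp P (natural_filtration y (t - 1)) (eps t) (fun=> 0)) ->
  (* constant conditional variance *)
  (forall t, is_cond_exp P (natural_filtration y (t - 1))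
                (fun x => eps t x ^+ 2) (fun=> sigma2)) ->
  (* uniform almost sure bound *)
  {ae P, forall x, forall t, `|eps t x| <= K} ->
  (* sup_t E[|eps_t|^{2p} | F_{t-1}] < oo a.s., for some p > 1 *)
  1 < p ->
  (exists Z : int -> T -> R,
      (forall t, is_cond_exp P (natural_filtration y (t - 1))
                   (fun x => `|eps t x| `^ (2 * p)) (Z t)) /\
      {ae P, forall x, exists M : R, forall t, Z t x <= M}) ->
  (* conclusion, for any F_{t-1}-predictor ytilde_{t-1} *)
  forall ytil : int -> T -> R,
    (forall t, G_measurable (natural_filtration y t) (ytil t)) ->
    {ae P, forall x,
       (sigma2%:E <= limn_einf (fun t : nat =>
          ((t%:R)^-1 * \sum_(1 <= s < t.+1)
              (y s%:Z x - ytil (s%:Z - 1) x) ^+ 2)%:E))%E}.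
Proof.
move=> my _ _ _ kappa0 _ _ y_MA eps_adapted _ eps_mds eps_cond_var eps_bound _ _.
move=> ytil ytil_adapted.
exact: (ae_liminf_avg_sqr_pred_err_ge P y eps ytil kappa sigma2 K my eps_adapted
  ytil_adapted eps_mds eps_cond_var eps_bound kappa0 y_MA).
Qed.
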